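(* Let $I\subset\mathbb{R}$ be an open interval and let $\alpha:I\to\mathbb{R}$ be a smooth function with $\alpha>0$ and $\alpha'\neq 0$ on $I$. Consider the rotational surface $M$ in $(\mathbb{R}^3,\|\cdot\|)$ parametrized by $f(u,v)=(\alpha(u)\cos v,\ \alpha(u)\sin v,\ u)$, $u\in I$. Then $M$ is flat (i.e. its Minkowski Gaussian curvature $K$ vanishes identically) if and only if $\alpha(u)=au+b$ on $I$ for constants $a\neq 0$ and $b$, i.e. $M$ is (part of) a circular cone with axis the $x_3$-axis.
   Context: Fix an integer $m\ge 2$. Let $\Phi(x_1,x_2,x_3)=(x_1^2+x_2^2)^m+x_3^{2m}$ and let $\|\cdot\|$ be the norm on $\mathbb{R}^3$ whose unit sphere is $S=\{x\in\mathbb{R}^3:\Phi(x)=1\}$ (a smooth, strictly convex surface). For a real number $t$ and an integer $k$, $t^{k/(2m-1)}$ means $(t^{1/(2m-1)})^k$ with the real odd root. For a surface given by a parametrization $f(s,v)$, its Birkhoff–Gauss map $\eta$ is the map into $S$ defined by requiring $\eta\in S$ and $\nabla\Phi(\eta)=\mu\, f_s\times f_v$ for some function $\mu>0$, where $\times$ is the standard cross product (so the tangent plane of $S$ at $\eta(p)$ is parallel to $T_pM$, and $d\eta_p$ is an endomorphism of $T_pM$). The Minkowski Gaussian curvature is $K=\det(d\eta_p)$ and the Minkowski mean curvature is $H=\tfrac12\operatorname{trace}(d\eta_p)$. The surface is flat if $K\equiv 0$ and minimal if $H\equiv 0$. *)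

From Stdlib Require Import Reals Lra.
From Coquelicot Require Import Coquelicot.
Open Scope R_scope.

Definition R3 := (R * R * R)%type.
Definition c1 (x : R3) : R := fst (fst x).
Definition c2 (x : R3) : R := snd (fst x).
Definition c3 (x : R3) : R := snd x.
Definition mk3 (a b c : R) : R3 := (a, b, c).

Definition vadd (x y : R3) : R3 := mk3 (c1 x + c1 y) (c2 x + c2 y) (c3 x + c3 y).
Definition vscal (k : R) (x : R3) : R3 := mk3 (k * c1 x) (k * c2 x) (k * c3 x).
Definition cross (x y : R3) : R3 :=
  mk3 (c2 x * c3 y - c3 x * c2 y)
      (c3 x * c1 y - c1 x * c3 y)
      (c1 x * c2 y - c2 x * c1 y).

(** The function Phi(x) = (x1^2 + x2^2)^m + x3^(2m); its unit level set S
    is the unit sphere of the norm. *)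
Definition Phi (m : nat) (x : R3) : R :=
  (c1 x ^ 2 + c2 x ^ 2) ^ m + c3 x ^ (2 * m).

Definition gradPhi (m : nat) (x : R3) : R3 :=
  mk3 (Derive (fun t => Phi m (mk3 t (c2 x) (c3 x))) (c1 x))
      (Derive (fun t => Phi m (mk3 (c1 x) t (c3 x))) (c2 x))
      (Derive (fun t => Phi m (mk3 (c1 x) (c2 x) t)) (c3 x)).

Definition d_s (F : R -> R -> R3) (s v : R) : R3 :=
  mk3 (Derive (fun t => c1 (F t v)) s)
      (Derive (fun t => c2 (F t v)) s)
      (Derive (fun t => c3 (F t v)) s).
Definition d_v (F : R -> R -> R3) (s v : R) : R3 :=
  mk3 (Derive (fun t => c1 (F s t)) v)
      (Derive (fun t => c2 (F s t)) v)
      (Derive (fun t => c3 (F s t)) v).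

Definition is_BG_map (m : nat) (D : R -> R -> Prop) (F eta : R -> R -> R3) : Prop :=
  forall s v, D s v ->
    Phi m (eta s v) = 1 /\
    exists mu : R, mu > 0 /\ gradPhi m (eta s v) = vscal mu (cross (d_s F s v) (d_v F s v)).

(** k is the Minkowski Gaussian curvature det(d eta_p) at the point with
    parameters (s,v): the matrix [[a b];[c d]] of d eta_p in the basis
    (F_s, F_v) of T_pM, i.e. d eta(F_s) = eta_s = a F_s + c F_v and
    d eta(F_v) = eta_v = b F_s + d F_v, has determinant k. *)
Definition minkowski_K_at (F eta : R -> R -> R3) (s v k : R) : Prop :=
  exists a b c d : R,
    d_s eta s v = vadd (vscal a (d_s F s v)) (vscal c (d_v F s v)) /\
    d_v eta s v = vadd (vscal b (d_s F s v)) (vscal d (d_v F s v)) /\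
    k = a * d - b * c.

Definition is_flat (D : R -> R -> Prop) (F eta : R -> R -> R3) : Prop :=
  forall s v, D s v -> minkowski_K_at F eta s v 0.

Definition in_interval (lo hi : Rbar) (u : R) : Prop :=
  Rbar_lt lo u /\ Rbar_lt u hi.

Definition rot_surface (alpha : R -> R) (u v : R) : R3 :=
  mk3 (alpha u * cos v) (alpha u * sin v) u.

From Stdlib Require Import Reals Lra Lia.
From Coquelicot Require Import Coquelicot.
Open Scope R_scope.

(* Write m = S n.  As f_u x f_v = alpha (-cos v, -sin v, alpha'), the Birkhoff-Gauss map is
   eta(u,v) = (-rho cos v, -rho sin v, zeta), where (rho, zeta) is the unique point with rho > 0,
   rho^(2m) + zeta^(2m) = 1 and zeta^(2m-1) = rho^(2m-1) alpha'(u).  So eta depends on u only through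
   alpha'(u), and zeta is an injective function of alpha', differentiable where alpha' <> 0.
   At v = pi/2 we get eta_v = -(rho/alpha) f_v, so K = 0 there forces the f_u-coefficient of eta_u,
   namely d/du zeta(alpha'(u)), to vanish: flatness makes zeta(alpha'), hence alpha', constant.
   Conversely, if alpha' is constant then eta_u = 0. *)

Lemma pow_lt_compat (x y : R) (n : nat) : 0 <= x < y -> x ^ S n < y ^ S n.
Proof.
  intros [Hx Hxy]. induction n as [|n IH]; [simpl; lra|].
  change (x * x ^ S n < y * y ^ S n).
  assert (0 <= x ^ S n) by (apply pow_le; lra).
  nra.
Qed.

Lemma pow_inj_pos (x y : R) (n : nat) : 0 < x -> 0 < y -> x ^ S n = y ^ S n -> x = y.
Proof.
  intros Hx Hy E. destruct (Rtotal_order x y) as [H|[H|H]]; [|exact H|].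
  - pose proof (pow_lt_compat x y n ltac:(lra)). lra.
  - pose proof (pow_lt_compat y x n ltac:(lra)). lra.
Qed.

Lemma pow_odd (x : R) (n : nat) : x ^ S (2 * n) = x * (x ^ 2) ^ n.
Proof. rewrite <- pow_mult. reflexivity. Qed.

Lemma pow_odd_lt_compat (x y : R) (n : nat) : x < y -> x ^ S (2 * n) < y ^ S (2 * n).
Proof.
  intros Hxy. destruct (Rle_dec 0 x) as [Hx|Hx]; [apply pow_lt_compat; lra|].
  destruct (Rle_dec y 0) as [Hy|Hy].
  - pose proof (pow_lt_compat (- y) (- x) (2 * n) ltac:(lra)) as H.
    rewrite !pow_odd in *. replace ((- y) ^ 2) with (y ^ 2) in H by ring.
    replace ((- x) ^ 2) with (x ^ 2) in H by ring. lra.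
  - rewrite !pow_odd.
    assert (0 < (x ^ 2) ^ n) by (apply pow_lt; nra).
    assert (0 < (y ^ 2) ^ n) by (apply pow_lt; nra).
    nra.
Qed.

Lemma pow_odd_inj (x y : R) (n : nat) : x ^ S (2 * n) = y ^ S (2 * n) -> x = y.
Proof.
  intros E. destruct (Rtotal_order x y) as [H|[H|H]]; [|exact H|];
    pose proof (pow_odd_lt_compat _ _ n H); lra.
Qed.

(* The real k-th root sign(s) |s|^(1/k) for odd k, written so that it is 0 at s = 0 (where
   [Rpower] returns the junk value 1) and visibly differentiable elsewhere. *)
Definition odd_root (k : nat) (s : R) : R := s * Rpower (Rabs s) (/ INR k - 1).

Lemma odd_root_pow (n : nat) (s : R) : odd_root (S (2 * n)) s ^ S (2 * n) = s.
Proof.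
  unfold odd_root. destruct (Req_dec s 0) as [->|Hs]; [simpl; ring|].
  assert (Habs : 0 < Rabs s) by (apply Rabs_pos_lt; exact Hs).
  assert (Hk : 0 < INR (S (2 * n))) by (apply lt_0_INR; lia).
  rewrite Rpow_mult_distr, <- (Rpower_pow _ (Rpower _ _)), Rpower_mult by apply exp_pos.
  replace ((/ INR (S (2 * n)) - 1) * INR (S (2 * n))) with (- INR (2 * n))
    by (rewrite S_INR in *; field; lra).
  rewrite Rpower_Ropp, Rpower_pow, pow_mult, pow2_abs, <- pow_mult by exact Habs.
  change (s ^ S (2 * n)) with (s * s ^ (2 * n)). field. apply pow_nonzero; exact Hs.
Qed.

Lemma ex_derive_odd_root (k : nat) (s : R) : s <> 0 -> ex_derive (odd_root k) s.
Proof.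
  intros Hs. unfold odd_root, Rpower. auto_derive.
  repeat split; [exact Hs | apply Rabs_pos_lt; exact Hs].
Qed.

Lemma one_plus_pow_even_pos (x : R) (k : nat) : 0 < 1 + x ^ (2 * k).
Proof. rewrite pow_mult. pose proof (pow_le (x ^ 2) k ltac:(nra)). lra. Qed.

(* With alpha'(u) = s, the point (-r cos v, -r sin v, z) lies on S and the gradient of Phi there is
   a positive multiple of f_u x f_v. *)
Definition gauss_profile (n : nat) (s r z : R) : Prop :=
  0 < r /\ z ^ S (2 * n) = r ^ S (2 * n) * s /\ r ^ (2 * S n) + z ^ (2 * S n) = 1.

Lemma gauss_profile_unique (n : nat) (s r z r' z' : R) :
  gauss_profile n s r z -> gauss_profile n s r' z' -> r = r' /\ z = z'.
Proof.
  intros [Hr [Hs HS]] [Hr' [Hs' HS']].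
  assert (Hw : z / r = z' / r').
  { apply (pow_odd_inj _ _ n). unfold Rdiv. rewrite !Rpow_mult_distr, !pow_inv, Hs, Hs'.
    field. split; apply pow_nonzero; lra. }
  set (w := z / r) in *.
  assert (Ez : z = w * r) by (unfold w; field; lra).
  assert (Ez' : z' = w * r') by (rewrite Hw; field; lra).
  rewrite Ez, Rpow_mult_distr in HS. rewrite Ez', Rpow_mult_distr in HS'.
  pose proof (one_plus_pow_even_pos w (S n)) as Hq.
  assert (E : r ^ (2 * S n) = r' ^ (2 * S n)) by nra.
  replace (2 * S n)%nat with (S (S (2 * n))) in E by lia.
  pose proof (pow_inj_pos _ _ _ Hr Hr' E) as <-. split; congruence.
Qed.

Definition gauss_radius (n : nat) (s : R) : R :=
  Rpower (1 + odd_root (S (2 * n)) s ^ (2 * S n)) (- / INR (2 * S n)).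

Definition gauss_height (n : nat) (s : R) : R := odd_root (S (2 * n)) s * gauss_radius n s.

Lemma gauss_profile_spec (n : nat) (s : R) :
  gauss_profile n s (gauss_radius n s) (gauss_height n s).
Proof.
  unfold gauss_height. set (w := odd_root (S (2 * n)) s). set (r := gauss_radius n s).
  pose proof (one_plus_pow_even_pos w (S n)) as Hq.
  assert (Hr : 0 < r) by apply exp_pos.
  assert (Hr2m : r ^ (2 * S n) = / (1 + w ^ (2 * S n))).
  { assert (0 < INR (2 * S n)) by (apply lt_0_INR; lia).
    unfold r, gauss_radius. rewrite <- Rpower_pow, Rpower_mult by apply exp_pos.
    replace (- / INR (2 * S n) * INR (2 * S n)) with (Ropp 1) by (field; lra).
    rewrite Rpower_Ropp, Rpower_1 by exact Hq. reflexivity. }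
  split; [exact Hr|split].
  - rewrite Rpow_mult_distr. unfold w. rewrite odd_root_pow. ring.
  - rewrite Rpow_mult_distr, Hr2m. field. lra.
Qed.

Lemma gauss_height_inj (n : nat) (s s' : R) : gauss_height n s = gauss_height n s' -> s = s'.
Proof.
  intros E.
  destruct (gauss_profile_spec n s) as [Hr [Hs HS]].
  destruct (gauss_profile_spec n s') as [Hr' [Hs' HS']].
  rewrite E in Hs, HS.
  assert (Er : gauss_radius n s ^ (2 * S n) = gauss_radius n s' ^ (2 * S n)) by lra.
  replace (2 * S n)%nat with (S (S (2 * n))) in Er by lia.
  apply pow_inj_pos in Er; [|exact Hr|exact Hr']. rewrite Er, Hs' in Hs.
  apply (Rmult_eq_reg_l (gauss_radius n s' ^ S (2 * n))); [lra|].
  apply pow_nonzero; lra.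
Qed.

Lemma ex_derive_gauss_height (n : nat) (s : R) : s <> 0 -> ex_derive (gauss_height n) s.
Proof.
  intros Hs. pose proof (ex_derive_odd_root (S (2 * n)) s Hs).
  unfold gauss_height, gauss_radius, Rpower. auto_derive. repeat split; auto.
  change (0 < 1 + odd_root (S (2 * n)) s ^ (2 * S n)). apply one_plus_pow_even_pos.
Qed.

Lemma mk3_eq (a b c a' b' c' : R) :
  a = a' -> b = b' -> c = c' -> mk3 a b c = mk3 a' b' c'.
Proof. intros -> -> ->. reflexivity. Qed.

Lemma gradPhi_S (n : nat) (x : R3) :
  gradPhi (S n) x =
  mk3 (2 * INR (S n) * (c1 x ^ 2 + c2 x ^ 2) ^ n * c1 x)
      (2 * INR (S n) * (c1 x ^ 2 + c2 x ^ 2) ^ n * c2 x)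
      (2 * INR (S n) * c3 x ^ S (2 * n)).
Proof.
  destruct x as [[x1 x2] x3]. unfold gradPhi, Phi, c1, c2, c3, mk3; cbn [fst snd].
  apply mk3_eq; apply is_derive_unique; auto_derive; auto.
  1-2: change (match n with 0%nat => 1 | S _ => INR n + 1 end) with (INR (S n));
    replace (x1 * (x1 * 1) + x2 * (x2 * 1)) with (x1 ^ 2 + x2 ^ 2) by ring; ring.
  replace (n + S (n + 0))%nat with (S (2 * n)) by lia.
  change (match S (2 * n) with 0%nat => 1 | S _ => INR (S (2 * n)) + 1 end)
    with (INR (S (2 * n)) + 1).
  rewrite !S_INR, mult_INR. simpl. ring.
Qed.

Lemma d_s_rot_surface (alpha : R -> R) (u v : R) : ex_derive alpha u ->
  d_s (rot_surface alpha) u v = mk3 (Derive alpha u * cos v) (Derive alpha u * sin v) 1.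
Proof.
  intros Ha. unfold d_s, rot_surface, c1, c2, c3, mk3; cbn [fst snd].
  apply mk3_eq; apply is_derive_unique; auto_derive; auto; rewrite Rmult_1_l; reflexivity.
Qed.

Lemma d_v_rot_surface (alpha : R -> R) (u v : R) :
  d_v (rot_surface alpha) u v = mk3 (- alpha u * sin v) (alpha u * cos v) 0.
Proof.
  unfold d_v, rot_surface, c1, c2, c3, mk3; cbn [fst snd].
  apply mk3_eq; apply is_derive_unique; auto_derive; auto; ring.
Qed.

Lemma gauss_profile_of_normal (n : nat) (x : R3) (s a c sn mu : R) :
  0 < a -> 0 < mu -> c ^ 2 + sn ^ 2 = 1 -> Phi (S n) x = 1 ->
  gradPhi (S n) x = vscal mu (cross (mk3 (s * c) (s * sn) 1) (mk3 (- a * sn) (a * c) 0)) ->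
  exists r z, gauss_profile n s r z /\ x = mk3 (- r * c) (- r * sn) z.
Proof.
  intros Ha Hmu Hcs HPhi Hg.
  destruct x as [[x1 x2] x3]. rewrite gradPhi_S in Hg.
  pose proof (f_equal c1 Hg) as E1. pose proof (f_equal c2 Hg) as E2.
  pose proof (f_equal c3 Hg) as E3. clear Hg.
  unfold Phi, vscal, cross, c1, c2, c3, mk3 in *; cbn [fst snd] in *.
  set (Q := x1 ^ 2 + x2 ^ 2) in *. set (P := Q ^ n) in *.
  assert (HN : 0 < 2 * INR (S n)) by (pose proof (lt_0_INR (S n) ltac:(lia)); lra).
  (* The gradient equations say (x1, x2) |(x1, x2)|^(2m-2) = - lam (c, sn) and
     x3^(2m-1) = lam s; taking norms in the first gives r^(2m-1) = lam for r = |(x1, x2)|. *)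
  set (lam := mu * a / (2 * INR (S n))).
  assert (Hlam : 0 < lam) by (unfold lam; apply Rdiv_lt_0_compat; nra).
  assert (F1 : x1 * P = - lam * c) by (unfold lam; field_simplify_eq; lra).
  assert (F2 : x2 * P = - lam * sn) by (unfold lam; field_simplify_eq; lra).
  assert (E3' : 2 * INR (S n) * x3 ^ S (2 * n) = mu * a * s).
  { rewrite E3. transitivity (mu * a * s * (c ^ 2 + sn ^ 2)); [ring|]. rewrite Hcs; ring. }
  assert (F3 : x3 ^ S (2 * n) = lam * s) by (unfold lam; field_simplify_eq; lra).
  assert (HPQ : P * P * Q = lam * lam).
  { transitivity ((x1 * P) ^ 2 + (x2 * P) ^ 2); [unfold Q; ring|].
    rewrite F1, F2. transitivity (lam * lam * (c ^ 2 + sn ^ 2)); [ring|]. rewrite Hcs; ring. }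
  assert (HQ : 0 < Q).
  { assert (0 <= Q) by (unfold Q; nra). destruct (Req_dec Q 0) as [E|]; [|lra].
    rewrite E in HPQ. nra. }
  set (r := sqrt Q).
  assert (Hr : 0 < r) by (apply sqrt_lt_R0; exact HQ).
  assert (Hr2 : r * r = Q) by (apply sqrt_sqrt; lra).
  assert (HP : P = r ^ (2 * n)) by (unfold P; rewrite pow_mult, <- Hr2; f_equal; ring).
  assert (HPpos : 0 < P) by (rewrite HP; apply pow_lt; exact Hr).
  assert (HrP : r * P = lam).
  { assert (Hprod : (r * P - lam) * (r * P + lam) = 0) by (rewrite <- Hr2 in HPQ; nra).
    apply Rmult_integral in Hprod as [|]; nra. }
  exists r, x3. split; [split; [exact Hr|split]|].
  - rewrite F3, <- HrP, HP. simpl. ring.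
  - rewrite <- HPhi, pow_mult, <- Hr2. f_equal. f_equal. ring.
  - apply mk3_eq; [| |reflexivity]; apply (Rmult_eq_reg_r P); try lra.
    + rewrite F1, <- HrP. ring.
    + rewrite F2, <- HrP. ring.
Qed.

Lemma in_interval_nonempty (lo hi : Rbar) : Rbar_lt lo hi -> exists u, in_interval lo hi u.
Proof.
  unfold in_interval. destruct lo as [a| |], hi as [b| |]; simpl; intros H; try contradiction.
  - exists ((a + b) / 2). simpl. lra.
  - exists (a + 1). simpl. lra.
  - exists (b - 1). simpl. lra.
  - exists 0. simpl. auto.
Qed.

Lemma in_interval_between (lo hi : Rbar) (a b x : R) :
  in_interval lo hi a -> in_interval lo hi b -> Rmin a b <= x <= Rmax a b ->
  in_interval lo hi x.
Proof.
  unfold in_interval, Rmin, Rmax. destruct (Rle_dec a b);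
    destruct lo as [l| |], hi as [h| |]; simpl; intros; lra.
Qed.

Lemma in_interval_locally (lo hi : Rbar) (u : R) :
  in_interval lo hi u -> locally u (in_interval lo hi).
Proof. apply (open_and _ _ (open_Rbar_gt lo) (open_Rbar_lt hi)). Qed.

Lemma in_interval_derive0_const (lo hi : Rbar) (g : R -> R) :
  (forall u, in_interval lo hi u -> is_derive g u 0) ->
  forall u1 u2, in_interval lo hi u1 -> in_interval lo hi u2 -> g u1 = g u2.
Proof.
  intros Hg u1 u2 H1 H2.
  assert (Hbetween : forall x, Rmin u1 u2 <= x <= Rmax u1 u2 -> is_derive g x 0)
    by (intros x Hx; apply Hg, (in_interval_between lo hi u1 u2); auto).
  destruct (MVT_gen g u1 u2 (fun _ => 0)) as [c [_ Hc]].
  - intros x Hx. apply Hbetween. lra.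
  - intros x Hx. apply continuity_pt_filterlim.
    apply (@ex_derive_continuous R_AbsRing R_NormedModule). exists 0. apply Hbetween, Hx.
  - lra.
Qed.

Lemma in_interval_affine_of_derive (lo hi : Rbar) (f : R -> R) (a u0 : R) :
  in_interval lo hi u0 -> (forall u, in_interval lo hi u -> is_derive f u a) ->
  forall u, in_interval lo hi u -> f u = a * u + (f u0 - a * u0).
Proof.
  intros Hu0 Hf u Hu.
  enough (f u - a * u = f u0 - a * u0) by lra.
  apply (in_interval_derive0_const lo hi (fun t => f t - a * t)); auto.
  intros t Ht. auto_derive; [exists a; apply Hf, Ht|].
  rewrite (is_derive_unique (fun x : R => f x) t a (Hf t Ht)). ring.
Qed.

Definition gauss_point (n : nat) (s v : R) : R3 :=
  mk3 (- gauss_radius n s * cos v) (- gauss_radius n s * sin v) (gauss_height n s).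

Lemma BG_map_rot_surface (n : nat) (D : R -> R -> Prop) (alpha : R -> R) (eta : R -> R -> R3)
  (u v : R) :
  is_BG_map (S n) D (rot_surface alpha) eta -> D u v -> ex_derive alpha u -> 0 < alpha u ->
  eta u v = gauss_point n (Derive alpha u) v.
Proof.
  intros HBG Huv Hd Hpos.
  destruct (HBG u v Huv) as [HPhi [mu [Hmu Hg]]].
  rewrite d_s_rot_surface, d_v_rot_surface in Hg by exact Hd.
  destruct (gauss_profile_of_normal n (eta u v) (Derive alpha u) (alpha u) (cos v) (sin v) mu)
    as [r [z [Hprof ->]]]; auto.
  { rewrite <- (sin2_cos2 v). unfold Rsqr. ring. }
  destruct (gauss_profile_unique n _ _ _ _ _ Hprof (gauss_profile_spec n (Derive alpha u)))
    as [-> ->].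
  reflexivity.
Qed.

Lemma d_v_gauss_point (n : nat) (eta : R -> R -> R3) (s u v : R) :
  (forall t, eta u t = gauss_point n s t) ->
  d_v eta u v = mk3 (gauss_radius n s * sin v) (- gauss_radius n s * cos v) 0.
Proof.
  intros E. unfold d_v. rewrite !(Derive_ext _ _ v (fun t => f_equal _ (E t))).
  unfold gauss_point, c1, c2, c3, mk3; cbn [fst snd].
  apply mk3_eq; apply is_derive_unique; auto_derive; auto; ring.
Qed.

Lemma d_s_locally_const (F : R -> R -> R3) (u v : R) :
  locally u (fun t => F t v = F u v) -> d_s F u v = mk3 0 0 0.
Proof.
  intros Hloc.
  assert (Hc : forall p : R3 -> R, Derive (fun t => p (F t v)) u = 0).
  { intros p. rewrite (Derive_ext_loc _ (fun _ => p (F u v))); [apply Derive_const|].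
    eapply filter_imp; [|exact Hloc]. intros t ->. reflexivity. }
  apply mk3_eq; apply Hc.
Qed.

Lemma minkowski_K0_c3_d_s (n : nat) (alpha : R -> R) (eta : R -> R -> R3) (s u : R) :
  ex_derive alpha u -> 0 < alpha u -> (forall t, eta u t = gauss_point n s t) ->
  minkowski_K_at (rot_surface alpha) eta u (PI / 2) 0 -> c3 (d_s eta u (PI / 2)) = 0.
Proof.
  intros Hd Hpos E [a [b [c [d [Es [Ev HK]]]]]].
  rewrite d_s_rot_surface, d_v_rot_surface, sin_PI2, cos_PI2 in Es, Ev by exact Hd.
  rewrite (d_v_gauss_point n eta s u (PI / 2) E), sin_PI2, cos_PI2 in Ev.
  pose proof (f_equal c1 Ev) as Ev1. pose proof (f_equal c3 Ev) as Ev3.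
  rewrite Es. unfold vadd, vscal, c1, c3, mk3 in *; cbn [fst snd] in *.
  assert (Hb : b = 0) by lra.
  assert (Hd0 : d <> 0).
  { intros ->. pose proof (gauss_profile_spec n s) as [Hr _]. lra. }
  assert (Ha : a = 0).
  { subst b. apply (Rmult_eq_reg_r d); [lra | exact Hd0]. }
  subst a. ring.
Qed.

Lemma minkowski_K0_of_d_s0 (n : nat) (alpha : R -> R) (eta : R -> R -> R3) (s u v : R) :
  ex_derive alpha u -> 0 < alpha u -> (forall t, eta u t = gauss_point n s t) ->
  d_s eta u v = mk3 0 0 0 -> minkowski_K_at (rot_surface alpha) eta u v 0.
Proof.
  intros Hd Hpos E Hs.
  exists 0, 0, 0, (- gauss_radius n s / alpha u).
  rewrite Hs, (d_v_gauss_point n eta s u v E), d_s_rot_surface, d_v_rot_surface by exact Hd.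
  unfold vadd, vscal, c1, c2, c3, mk3; cbn [fst snd].
  split; [|split]; [apply mk3_eq; ring | apply mk3_eq; field; lra | ring].
Qed.

Section RotationalSurface.

Variables (n : nat) (lo hi : Rbar) (alpha : R -> R) (eta : R -> R -> R3).
Hypothesis alpha_derivable : forall u, in_interval lo hi u -> ex_derive alpha u.
Hypothesis alpha_pos : forall u, in_interval lo hi u -> 0 < alpha u.
Hypothesis eta_BG : is_BG_map (S n) (fun u v => in_interval lo hi u) (rot_surface alpha) eta.

Lemma eta_gauss_point (u : R) :
  in_interval lo hi u -> forall v, eta u v = gauss_point n (Derive alpha u) v.
Proof. intros Hu v. apply (BG_map_rot_surface n _ alpha eta u v eta_BG); auto. Qed.

Lemma flat_slope_const :
  (forall u, in_interval lo hi u -> ex_derive (Derive alpha) u) ->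
  (forall u, in_interval lo hi u -> Derive alpha u <> 0) ->
  is_flat (fun u v => in_interval lo hi u) (rot_surface alpha) eta ->
  forall u1 u2, in_interval lo hi u1 -> in_interval lo hi u2 ->
  Derive alpha u1 = Derive alpha u2.
Proof.
  intros Hd1 Hnz Hflat u1 u2 H1 H2.
  apply (gauss_height_inj n).
  apply (in_interval_derive0_const lo hi (fun t => gauss_height n (Derive alpha t))); auto.
  intros u Hu.
  assert (Hheight : Derive (fun t => gauss_height n (Derive alpha t)) u = 0).
  { rewrite <- (minkowski_K0_c3_d_s n alpha eta (Derive alpha u) u); auto.
    - apply Derive_ext_loc. eapply filter_imp; [|apply (in_interval_locally lo hi u Hu)].
      intros t Ht. rewrite (eta_gauss_point t Ht). reflexivity.
    - apply eta_gauss_point, Hu. }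
  rewrite <- Hheight. apply Derive_correct.
  apply (ex_derive_comp (gauss_height n) (Derive alpha)); auto.
  apply ex_derive_gauss_height, Hnz, Hu.
Qed.

Lemma affine_flat (a b : R) :
  (forall u, in_interval lo hi u -> alpha u = a * u + b) ->
  is_flat (fun u v => in_interval lo hi u) (rot_surface alpha) eta.
Proof.
  intros Hlin u v Hu.
  assert (Hslope : forall t, in_interval lo hi t -> Derive alpha t = a).
  { intros t Ht. rewrite (Derive_ext_loc _ (fun t => a * t + b)).
    - apply is_derive_unique. auto_derive; auto; ring.
    - eapply filter_imp; [|apply (in_interval_locally lo hi t Ht)]. exact Hlin. }
  apply (minkowski_K0_of_d_s0 n alpha eta (Derive alpha u)); auto.
  - apply eta_gauss_point, Hu.
  - apply d_s_locally_const.
    eapply filter_imp; [|apply (in_interval_locally lo hi u Hu)].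
    intros t Ht. rewrite !eta_gauss_point, !Hslope; auto.
Qed.

End RotationalSurface.

Theorem proposition3p1 (m : nat) (lo hi : Rbar) (alpha : R -> R)
  (eta : R -> R -> R3) :
  (2 <= m)%nat ->
  Rbar_lt lo hi ->
  (forall (n : nat) (u : R), in_interval lo hi u -> ex_derive (Derive_n alpha n) u) ->
  (forall u, in_interval lo hi u -> alpha u > 0) ->
  (forall u, in_interval lo hi u -> Derive alpha u <> 0) ->
  is_BG_map m (fun u v => in_interval lo hi u) (rot_surface alpha) eta ->
  (is_flat (fun u v => in_interval lo hi u) (rot_surface alpha) eta <->
   exists a b : R, a <> 0 /\ forall u, in_interval lo hi u -> alpha u = a * u + b).
Proof.
  intros Hm Hlh Hsmooth Hpos Hnz HBG.
  destruct m as [|n]; [lia|].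
  pose proof (fun u => Hsmooth 0%nat u) as Hd.
  pose proof (fun u => Hsmooth 1%nat u) as Hd1.
  split.
  - intros Hflat.
    destruct (in_interval_nonempty lo hi Hlh) as [u0 Hu0].
    set (a := Derive alpha u0).
    exists a, (alpha u0 - a * u0). split; [apply Hnz, Hu0|].
    apply (in_interval_affine_of_derive lo hi alpha a u0 Hu0).
    intros t Ht. unfold a.
    rewrite <- (flat_slope_const n lo hi alpha eta Hd Hpos HBG Hd1 Hnz Hflat t u0) by auto.
    apply Derive_correct, Hd, Ht.
  - intros [a [b [_ Hlin]]]. exact (affine_flat n lo hi alpha eta Hd Hpos HBG a b Hlin).
Qed.
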